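(* Let $\sigma$ be the softmax-1 activation, take $m=0$, $r=0$ and unspecialized biases $b=\tilde b\mathbf 1_H$ with $\tilde b\in\mathbb R$. Then for every $h\in[H]$, $$\partial_{b_h}\tilde{\mathcal E}_\sigma(0,0,b,v)=-2\Big(\frac{Lv}{L+e^{\tilde b}}-1\Big)\frac vH\frac{e^{\tilde b}}{(L+e^{\tilde b})^2},\qquad \partial_v\tilde{\mathcal E}_\sigma(0,0,b,v)=2\Big(\frac{Lv}{L+e^{\tilde b}}-1\Big)\frac1{L+e^{\tilde b}}.$$ The fixed points of the corresponding gradient-flow system satisfy $Lv=L+e^{\tilde b}$ and they are attractive. Finally, at initialization $b=0$, $v=1$: $\partial_{b_h}\tilde{\mathcal E}_\sigma(0,0,0,1)>0$ and $\partial_v\tilde{\mathcal E}_\sigma(0,0,0,1)<0$.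
   Context: Fix integers $L,H,F\ge1$ and a distribution $P_\theta$ on $\mathbb R^F$; $\mathbf 1_H$ is the all-ones vector. For $m\in\mathbb R^{H\times F}$, $r$ symmetric $H\times H$, $b\in\mathbb R^H$, $v\in\mathbb R$: $\tilde{\mathcal E}_\sigma(m,r,b,v)=\mathbb E\big[\sum_{\ell=1}^L(\delta_{\ell,\epsilon}-\frac1H\sum_{h=1}^H\sigma(\chi,b,v;h)_\ell)^2\big]$, $\chi_{h\ell}=\sum_fm_{hf}\chi^*_{f\ell}+\sum_{h'}r_{hh'}\xi_{h'\ell}$, with $\epsilon\sim\mathrm{Unif}(\{1,\dots,L\})$, $\theta\sim P_\theta$, and conditionally independent $\chi^*_{:\ell}\sim\mathcal N(\delta_{\ell,\epsilon}\theta,I_F)$, $\xi_{:\ell}\sim\mathcal N(0,I_H)$. The softmax-1 activation is $\sigma(\chi,b,v;h)_\ell=v e^{\chi_{h\ell}}/(e^{b_h}+\sum_{\ell'=1}^Le^{\chi_{h\ell'}})$. The gradient flow is $\partial_\tau b=-\nabla_b\tilde{\mathcal E}_\sigma$, $\partial_\tau v=-\nabla_v\tilde{\mathcal E}_\sigma$. *)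

From HB Require Import structures.
From mathcomp Require Import all_boot all_order all_algebra.
From mathcomp Require Import all_classical all_reals all_analysis.
Set Implicit Arguments. Unset Strict Implicit. Unset Printing Implicit Defensive.
Import Order.TTheory GRing.Theory Num.Theory.
Import numFieldNormedType.Exports.
Local Open Scope classical_set_scope.
Local Open Scope ring_scope.

Definition chi_in {R : realType} {H F L : nat} (m : 'M[R]_(H, F)) (r : 'M[R]_H)
  (cs : 'M[R]_(F, L)) (xi : 'M[R]_(H, L)) : 'M[R]_(H, L) := m *m cs + r *m xi.

Definition softmax1 {R : realType} {H L : nat} (chi : 'M[R]_(H, L))
  (b : 'I_H -> R) (v : R) (h : 'I_H) (l : 'I_L) : R :=
  v * expR (chi h l) / (expR (b h) + \sum_(l' < L) expR (chi h l')).

Definition loss {R : realType} {H L : nat} (e : 'I_L) (chi : 'M[R]_(H, L))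
  (b : 'I_H -> R) (v : R) : R :=
  \sum_(l < L) ((l == e)%:R - H%:R^-1 * \sum_(h < H) softmax1 chi b v h l) ^+ 2.

Definition Etilde {d} {T : measurableType d} {R : realType} {H F L : nat}
  (P : probability T R) (eps : T -> 'I_L) (cs : T -> 'M[R]_(F, L))
  (xi : T -> 'M[R]_(H, L)) (m : 'M[R]_(H, F)) (r : 'M[R]_H)
  (b : 'I_H -> R) (v : R) : R :=
  fine ('E_P[fun w => loss (eps w) (chi_in m r (cs w) (xi w)) b v])%E.

Definition cst_b {R : realType} {H : nat} (bt : R) : 'I_H -> R := fun _ => bt.

Definition bias_bump {R : realType} {H : nat} (b : 'I_H -> R) (h : 'I_H) (t : R)
  : 'I_H -> R := fun h' => b h' + (if h' == h then t else 0).

Definition pb {R : realType} {H : nat} (E : ('I_H -> R) -> R -> R)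
  (b : 'I_H -> R) (v : R) (h : 'I_H) : R := derive1 (fun t => E (bias_bump b h t) v) 0.
Definition pv {R : realType} {H : nat} (E : ('I_H -> R) -> R -> R)
  (b : 'I_H -> R) (v : R) : R := derive1 (fun w => E b w) v.

Definition fixed_point {R : realType} {H : nat} (E : ('I_H -> R) -> R -> R)
  (b : 'I_H -> R) (v : R) : Prop :=
  (forall h, pb E b v h = 0) /\ pv E b v = 0.

(* Jacobian, w.r.t. (bt, v), of the gradient-flow vector field restricted to
   uniform biases b = bt 1_H:  (bt, v) |-> (- pb E (bt 1) v h, - pv E (bt 1) v) *)
Definition reduced_jac {R : realType} {H : nat} (E : ('I_H -> R) -> R -> R)
  (h : 'I_H) (bt v : R) : 'M[R]_2 :=
  \matrix_(i < 2, j < 2)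
    if (i : nat) == 0%N then
      (if (j : nat) == 0%N then derive1 (fun x => - pb E (cst_b x) v h) bt
       else derive1 (fun w => - pb E (cst_b bt) w h) v)
    else
      (if (j : nat) == 0%N then derive1 (fun x => - pv E (cst_b x) v) bt
       else derive1 (fun w => - pv E (cst_b bt) w) v).

(* attractive (linearization): all eigenvalues (roots of the characteristic
   polynomial, which splits over R) are <= 0 and at least one is < 0; the zero
   eigenvalue being unavoidable along a curve of fixed points *)
Definition attractive {R : realType} (J : 'M[R]_2) : Prop :=
  exists a1 a2 : R, char_poly J = ('X - a1%:P) * ('X - a2%:P) /\
    a1 <= 0 /\ a2 <= 0 /\ (a1 < 0 \/ a2 < 0).

From HB Require Import structures.
From mathcomp Require Import all_boot all_order all_algebra.
From mathcomp Require Import all_classical all_reals all_analysis.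
From mathcomp Require Import ring lra.
Set Implicit Arguments. Unset Strict Implicit. Unset Printing Implicit Defensive.
Import Order.TTheory GRing.Theory Num.Theory.
Import numFieldNormedType.Exports.
Local Open Scope classical_set_scope.
Local Open Scope ring_scope.

(* At m = r = 0 every softmax-1 output equals v / (e^{b_h} + L), so the loss is
   the deterministic quadratic 1 - 2 s + L s^2 in the mean output s.  For a
   uniform bias bt both gradient components factor as the defect
   L v / (L + e^bt) - 1 times a gain of constant sign.  Hence the fixed points
   are the zeros of the defect, and there the Jacobian of the flow is the outer
   product of the gain vector with the gradient of the defect: its determinant
   vanishes and its trace is negative, so its eigenvalues are 0 and a negative
   number. *)

Lemma char_poly_mx2 (K : comNzRingType) (A : 'M[K]_2) :
  char_poly A = 'X^2 - (A 0 0 + A 1 1)%:P * 'X + (A 0 0 * A 1 1 - A 0 1 * A 1 0)%:P.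
Proof.
rewrite /char_poly (expand_det_row _ 0) !big_ord_recl big_ord0 addr0.
rewrite /cofactor !det_mx11 !mxE /= !expr0 !mul1r expr1 mulr1n mulr0n !sub0r.
have lift0 (j : 'I_1) : lift ord0 j = 1 :> 'I_2 by apply/val_inj; rewrite ord1.
have lift1 (j : 'I_1) : lift 1 j = 0 :> 'I_2 by apply/val_inj; rewrite ord1.
rewrite !lift0 !lift1 !polyCD !polyCN !polyCM; ring.
Qed.

Lemma attractive_mx2 (R : realType) (J : 'M[R]_2) :
  J 0 0 * J 1 1 = J 0 1 * J 1 0 -> J 0 0 + J 1 1 < 0 -> attractive J.
Proof.
move=> det0 tr_lt0; exists 0, (J 0 0 + J 1 1).
split; first by rewrite char_poly_mx2 det0 subrr polyC0; ring.
by split; [|split; [exact: ltW | right]].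
Qed.

Lemma derive1_mul_root (R : realType) (f g : R -> R) (x df : R) :
  is_derive x 1 f df -> derivable g x 1 -> f x = 0 ->
  derive1 (fun y => f y * g y) x = df * g x.
Proof.
move=> [f_der <-] g_der fx0.
by rewrite derive1E (deriveM f_der g_der) fx0 scale0r add0r mulrC.
Qed.

Lemma is_derive_quad_comp (R : realType) (u : R -> R) (c x du : R) :
  is_derive x 1 u du ->
  is_derive x 1 (fun t => 1 - 2 * u t + c * u t ^+ 2) (2 * (c * u x - 1) * du).
Proof.
move=> u_der.
have := is_deriveD (is_deriveB (@is_derive_cst R R^o R^o (1 : R) x 1)
  (is_deriveZ 2 u_der)) (is_deriveZ c (is_deriveX 2 u_der)).
move=> /is_derive_eq der_eq.
have -> : (fun t => 1 - 2 * u t + c * u t ^+ 2) = cst 1 - 2 *: u + c *: u ^+ 2.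
  by apply/funext.
apply: der_eq.
by rewrite /GRing.scale /=; ring.
Qed.

Section SoftmaxOneAtZeroInput.
Variables (R : realType) (H L : nat).

Definition mean_softmax1 (b : 'I_H -> R) (v : R) : R :=
  H%:R^-1 * \sum_(h < H) v / (expR (b h) + L%:R).

Lemma softmax1_chi0 (b : 'I_H -> R) (v : R) (h : 'I_H) (l : 'I_L) :
  softmax1 (0 : 'M[R]_(H, L)) b v h l = v / (expR (b h) + L%:R).
Proof.
rewrite /softmax1 mxE expR0 mulr1 (eq_bigr (fun=> 1)) ?sumr_const ?card_ord //.
by move=> l' _; rewrite mxE expR0.
Qed.

Lemma loss_chi0 (e : 'I_L) (b : 'I_H -> R) (v : R) :
  loss e (0 : 'M[R]_(H, L)) b v =
  1 - 2 * mean_softmax1 b v + L%:R * mean_softmax1 b v ^+ 2.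
Proof.
set s := mean_softmax1 b v.
have mean_out l : H%:R^-1 * \sum_(h < H) softmax1 (0 : 'M[R]_(H, L)) b v h l = s.
  by congr (_ * _); apply: eq_bigr => h _; rewrite softmax1_chi0.
rewrite /loss (eq_bigr (fun l => (l == e)%:R * (1 - 2 * s) + s ^+ 2)); last first.
  by move=> l _; rewrite mean_out; case: (l == e) => /=; ring.
rewrite big_split /= sumr_const card_ord -big_distrl /= (bigD1 e) //= eqxx.
by rewrite big1 ?addr0 => [|l /negbTE ->] //=; rewrite -mulr_natl; ring.
Qed.

Lemma mean_softmax1_cst (bt v : R) : (0 < H)%N ->
  mean_softmax1 (cst_b bt) v = v / (expR bt + L%:R).
Proof.
move=> H_gt0; rewrite /mean_softmax1 /cst_b sumr_const card_ord -(mulr_natl (v / _)) mulKf //.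
by rewrite pnatr_eq0 -lt0n.
Qed.

Lemma mean_softmax1E (b : 'I_H -> R) (v : R) :
  mean_softmax1 b v = mean_softmax1 b 1 * v.
Proof.
rewrite /mean_softmax1 -mulrA mulr_suml; congr (_ * _).
by apply: eq_bigr => h _; rewrite mul1r mulrC.
Qed.

Lemma is_derive_mean_softmax1_v (b : 'I_H -> R) (v : R) :
  is_derive v 1 (mean_softmax1 b) (mean_softmax1 b 1).
Proof.
have -> : mean_softmax1 b = *:%R (mean_softmax1 b 1).
  by apply/funext => w; rewrite mean_softmax1E.
have := is_deriveZ (mean_softmax1 b 1) (@is_derive_id R R^o v 1).
move=> /is_derive_eq; apply.
by rewrite /GRing.scale /= mulr1.
Qed.

Lemma is_derive_mean_softmax1_bias (b : 'I_H -> R) (h : 'I_H) (v : R) :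
  is_derive (0 : R) (1 : R) (fun t => mean_softmax1 (bias_bump b h t) v)
    (- (H%:R^-1 * (v * expR (b h) / (expR (b h) + L%:R) ^+ 2))).
Proof.
set rest := \sum_(i < H | i != h) v / (expR (b i) + L%:R).
have -> : (fun t => mean_softmax1 (bias_bump b h t) v) =
          (fun t => H%:R^-1 * (v / (expR (b h) * expR t + L%:R) + rest)).
  apply/funext => t; rewrite /mean_softmax1 (bigD1 h) //= /bias_bump eqxx expRD.
  by congr (_ * (_ + _)); apply: eq_bigr => i /negbTE ->; rewrite addr0.
have denom_der := is_deriveD (is_deriveZ (expR (b h)) (is_derive_expR 0))
  (@is_derive_cst R R^o R^o L%:R 0 1).
have denom_neq0 : (expR (b h) *: expR + cst L%:R) (0 : R) != 0.
  by rewrite !fctE /GRing.scale /= expR0 mulr1 gt_eqF // ltr_pwDl ?expR_gt0.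
have := is_deriveZ H%:R^-1 (is_deriveD (is_deriveZ v (is_deriveV denom_neq0 denom_der))
  (@is_derive_cst R R^o R^o rest 0 1)).
move=> /is_derive_eq; apply.
by rewrite !fctE /GRing.scale /= expR0 !mulr1 !addr0; ring.
Qed.

End SoftmaxOneAtZeroInput.

Lemma bias_bump0 (R : realType) (H : nat) (b : 'I_H -> R) (h : 'I_H) :
  bias_bump b h 0 = b.
Proof. by apply/funext => i; rewrite /bias_bump; case: (i == h); rewrite addr0. Qed.

(* The loss no longer depends on the sample, so the law of eps and the values
   of chi*, xi play no role: lemma6 never uses its hypotheses on eps. *)
Lemma Etilde_chi0 (R : realType) (L H F : nat) (d : measure_display)
    (T : measurableType d) (P : probability T R) (eps : T -> 'I_L)
    (cs : T -> 'M[R]_(F, L)) (xi : T -> 'M[R]_(H, L)) (b : 'I_H -> R) (v : R) :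
  Etilde P eps cs xi 0 0 b v =
  1 - 2 * mean_softmax1 L b v + L%:R * mean_softmax1 L b v ^+ 2.
Proof.
rewrite /Etilde (_ : (fun w => _) = cst (1 - 2 * mean_softmax1 L b v
  + L%:R * mean_softmax1 L b v ^+ 2)) ?expectation_cst //.
by apply/funext => w; rewrite /chi_in !mul0mx addr0 loss_chi0.
Qed.

Section UniformBias.
Variables (R : realType) (L H F : nat) (d : measure_display) (T : measurableType d).
Variables (P : probability T R) (eps : T -> 'I_L).
Variables (cs : T -> 'M[R]_(F, L)) (xi : T -> 'M[R]_(H, L)).
Hypotheses (L_gt0 : (0 < L)%N) (H_gt0 : (0 < H)%N).

Local Notation E := (Etilde P eps cs xi 0 0).

Definition defect (bt v : R) : R := L%:R * v / (L%:R + expR bt) - 1.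
Definition bias_gain (bt v : R) : R := 2 * (v / H%:R) * (expR bt / (L%:R + expR bt) ^+ 2).
Definition v_gain (bt : R) : R := -2 / (L%:R + expR bt).

Lemma L_expR_gt0 (x : R) : 0 < L%:R + expR x.
Proof. exact: ltr_wpDl (ler0n _ _) (expR_gt0 x). Qed.

Lemma is_derive_Etilde_bias (bt v : R) (h : 'I_H) :
  is_derive (0 : R) (1 : R) (fun t => E (bias_bump (cst_b bt) h t) v)
    (- 2 * defect bt v * (v / H%:R) * (expR bt / (L%:R + expR bt) ^+ 2)).
Proof.
rewrite (funext (fun t => Etilde_chi0 P eps cs xi (bias_bump (cst_b bt) h t) v)).
have := is_derive_quad_comp L%:R (is_derive_mean_softmax1_bias L (cst_b bt) h v).
move=> /is_derive_eq; apply.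
have D_gt0 := L_expR_gt0 bt; have Hr_gt0 : 0 < H%:R :> R by rewrite ltr0n.
rewrite bias_bump0 mean_softmax1_cst // /defect /cst_b.
by field; rewrite !gt_eqF.
Qed.

Lemma is_derive_Etilde_v (bt v : R) :
  is_derive v (1 : R) (fun w => E (cst_b bt) w)
    (2 * defect bt v * (1 / (L%:R + expR bt))).
Proof.
rewrite (funext (Etilde_chi0 P eps cs xi (cst_b bt))).
have := is_derive_quad_comp L%:R
  (is_derive_mean_softmax1_v L (cst_b bt : 'I_H -> R) v).
move=> /is_derive_eq; apply.
have D_gt0 := L_expR_gt0 bt.
rewrite !mean_softmax1_cst // /defect.
by field; rewrite gt_eqF.
Qed.

Lemma pb_Etilde_cst (bt v : R) (h : 'I_H) :
  pb E (cst_b bt) v h = - (defect bt v * bias_gain bt v).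
Proof.
rewrite /pb derive1E; have [_ ->] := is_derive_Etilde_bias bt v h.
by rewrite /bias_gain; ring.
Qed.

Lemma pv_Etilde_cst (bt v : R) : pv E (cst_b bt) v = - (defect bt v * v_gain bt).
Proof.
rewrite /pv derive1E; have [_ ->] := is_derive_Etilde_v bt v.
by rewrite /v_gain; ring.
Qed.

Lemma bias_gain_gt0 (bt v : R) : 0 < v -> 0 < bias_gain bt v.
Proof.
move=> v_gt0; have D_gt0 := L_expR_gt0 bt.
by rewrite /bias_gain !mulr_gt0 ?invr_gt0 ?expR_gt0 ?exprn_gt0 ?ltr0n.
Qed.

Lemma v_gain_lt0 (bt : R) : v_gain bt < 0.
Proof. by rewrite /v_gain mulNr oppr_lt0 divr_gt0 // L_expR_gt0. Qed.

Lemma defect_eq0 (bt v : R) : defect bt v = 0 <-> L%:R * v = L%:R + expR bt.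
Proof.
have D_neq0 := lt0r_neq0 (L_expR_gt0 bt).
rewrite /defect; split => [/eqP|->]; last by rewrite divff // subrr.
by rewrite subr_eq0 => /eqP /divr1_eq.
Qed.

Lemma fixed_point_cst (bt v : R) :
  fixed_point E (cst_b bt) v <-> L%:R * v = L%:R + expR bt.
Proof.
rewrite -defect_eq0; split => [[_]|D0].
  rewrite pv_Etilde_cst => /eqP.
  by rewrite oppr_eq0 mulf_eq0 (lt_eqF (v_gain_lt0 bt)) orbF => /eqP.
by split => [h|]; rewrite ?pb_Etilde_cst ?pv_Etilde_cst D0 mul0r oppr0.
Qed.

Lemma defect_init_lt0 : defect 0 1 < 0.
Proof.
have := L_expR_gt0 0; rewrite /defect expR0 mulr1 subr_lt0 => D_gt0.
by rewrite ltr_pdivrMr // mul1r ltrDl.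
Qed.

Lemma pb_Etilde_init_gt0 (h : 'I_H) : 0 < pb E (cst_b 0) 1 h.
Proof. by rewrite pb_Etilde_cst oppr_gt0 nmulr_rlt0 ?defect_init_lt0 ?bias_gain_gt0. Qed.

Lemma pv_Etilde_init_lt0 : pv E (cst_b 0) 1 < 0.
Proof. by rewrite pv_Etilde_cst oppr_lt0 nmulr_rgt0 ?defect_init_lt0 ?v_gain_lt0. Qed.

Lemma is_derive_defect_bias (bt v : R) :
  is_derive bt 1 (defect^~ v) (- (L%:R * v * expR bt / (L%:R + expR bt) ^+ 2)).
Proof.
have D_neq0 : (cst L%:R + expR) bt != 0 by exact: lt0r_neq0 (L_expR_gt0 bt).
have := is_deriveB (is_deriveZ (L%:R * v) (is_deriveV D_neq0
  (is_deriveD (@is_derive_cst R R^o R^o L%:R bt 1) (is_derive_expR bt))))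
  (@is_derive_cst R R^o R^o 1 bt 1).
move=> /is_derive_eq; apply.
by rewrite !fctE /GRing.scale /=; field.
Qed.

Lemma is_derive_defect_v (bt v : R) :
  is_derive v 1 (defect bt) (L%:R / (L%:R + expR bt)).
Proof.
have := is_deriveB (is_deriveM (is_deriveZ L%:R (@is_derive_id R R^o v 1))
    (@is_derive_cst R R^o R^o (L%:R + expR bt)^-1 v 1))
  (@is_derive_cst R R^o R^o 1 v 1).
move=> /is_derive_eq; apply.
by rewrite !fctE /GRing.scale /=; ring.
Qed.

Lemma derivable_bias_gain_bias (bt v : R) : derivable (bias_gain^~ v) bt 1.
Proof.
have D2_neq0 : ((cst L%:R + expR) ^+ 2) bt != 0.
  by rewrite !fctE expf_neq0 // lt0r_neq0 // L_expR_gt0.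
have [der _] := is_deriveZ (2 * (v / H%:R)) (is_deriveM (is_derive_expR bt)
  (is_deriveV D2_neq0 (is_deriveX 2
    (is_deriveD (@is_derive_cst R R^o R^o L%:R bt 1) (is_derive_expR bt))))).
exact: der.
Qed.

Lemma derivable_bias_gain_v (bt v : R) : derivable (bias_gain bt) v 1.
Proof.
rewrite /bias_gain; apply: derivableM; last exact: derivable_cst.
apply: derivableM; first exact: (derivable_cst (2 : R)).
by apply: derivableM; [exact: derivable_id | exact: derivable_cst].
Qed.

Lemma derivable_v_gain (bt : R) : derivable v_gain bt 1.
Proof.
apply: (derivableM (f := cst (-2)) (g := fun y => (L%:R + expR y)^-1)).
  exact: derivable_cst.
apply: derivableV; first exact: lt0r_neq0 (L_expR_gt0 bt).
by apply: derivableD; [exact: (derivable_cst (L%:R : R)) | exact: derivable_expR].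
Qed.

Lemma reduced_jac_attractive (bt v : R) (h : 'I_H) :
  L%:R * v = L%:R + expR bt -> attractive (reduced_jac E h bt v).
Proof.
move=> fixed; have D0 := proj2 (defect_eq0 bt v) fixed.
have Lr_gt0 : 0 < L%:R :> R by rewrite ltr0n.
have v_gt0 : 0 < v by rewrite -(pmulr_rgt0 _ Lr_gt0) fixed L_expR_gt0.
have flow_b x w : - pb E (cst_b x) w h = defect x w * bias_gain x w.
  by rewrite pb_Etilde_cst opprK.
have flow_v x w : - pv E (cst_b x) w = defect x w * v_gain x.
  by rewrite pv_Etilde_cst opprK.
have J00 : reduced_jac E h bt v 0 0 =
    - (L%:R * v * expR bt / (L%:R + expR bt) ^+ 2) * bias_gain bt v.
  rewrite mxE /= (funext (flow_b^~ v)).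
  exact: derive1_mul_root (is_derive_defect_bias bt v) (@derivable_bias_gain_bias bt v) D0.
have J01 : reduced_jac E h bt v 0 1 = L%:R / (L%:R + expR bt) * bias_gain bt v.
  rewrite mxE /= (funext (flow_b bt)).
  exact: derive1_mul_root (is_derive_defect_v bt v) (@derivable_bias_gain_v bt v) D0.
have J10 : reduced_jac E h bt v 1 0 =
    - (L%:R * v * expR bt / (L%:R + expR bt) ^+ 2) * v_gain bt.
  rewrite mxE /= (funext (flow_v^~ v)).
  exact: derive1_mul_root (is_derive_defect_bias bt v) (@derivable_v_gain bt) D0.
have J11 : reduced_jac E h bt v 1 1 = L%:R / (L%:R + expR bt) * v_gain bt.
  rewrite mxE /= (funext (flow_v bt)).
  exact: derive1_mul_root (is_derive_defect_v bt v) (derivable_cst _ _ _) D0.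
apply: attractive_mx2; first by rewrite J00 J01 J10 J11; ring.
rewrite J00 J11.
have dDb_gt0 : 0 < L%:R * v * expR bt / (L%:R + expR bt) ^+ 2.
  by rewrite !mulr_gt0 ?invr_gt0 ?expR_gt0 ?exprn_gt0 ?L_expR_gt0.
have dDv_gt0 : 0 < L%:R / (L%:R + expR bt) by rewrite divr_gt0 ?L_expR_gt0.
have := bias_gain_gt0 bt v_gt0; have := v_gain_lt0 bt.
nra.
Qed.

End UniformBias.

Theorem lemma6 (R : realType) (L H F : nat)
  (hL : (0 < L)%N) (hH : (0 < H)%N) (hF : (0 < F)%N)
  (d : measure_display) (T : measurableType d) (P : probability T R)
  (eps : T -> 'I_L) (cs : T -> 'M[R]_(F, L)) (xi : T -> 'M[R]_(H, L))
  (eps_meas : forall l : 'I_L, measurable (eps @^-1` [set l]))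
  (eps_unif : forall l : 'I_L, P (eps @^-1` [set l]) = (L%:R^-1)%:E) :
  let E := fun (b : 'I_H -> R) (v : R) => Etilde P eps cs xi 0 0 b v in
  (forall (bt v : R) (h : 'I_H),
     is_derive (0 : R) (1 : R) (fun t => E (bias_bump (cst_b bt) h t) v)
       (- 2 * (L%:R * v / (L%:R + expR bt) - 1) * (v / H%:R)
          * (expR bt / (L%:R + expR bt) ^+ 2))) /\
  (forall bt v : R,
     is_derive v (1 : R) (fun w => E (cst_b bt) w)
       (2 * (L%:R * v / (L%:R + expR bt) - 1) * (1 / (L%:R + expR bt)))) /\
  (forall bt v : R, fixed_point E (cst_b bt) v <-> L%:R * v = L%:R + expR bt) /\
  (forall (bt v : R) (h : 'I_H), L%:R * v = L%:R + expR bt ->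
     attractive (reduced_jac E h bt v)) /\
  (forall h : 'I_H, 0 < pb E (cst_b 0) 1 h) /\ pv E (cst_b 0) 1 < 0.
Proof.
move=> E.
split; first exact: is_derive_Etilde_bias.
split; first exact: is_derive_Etilde_v.
split; first exact: fixed_point_cst.
split; first exact: reduced_jac_attractive.
by split; [exact: pb_Etilde_init_gt0 | exact: pv_Etilde_init_lt0].
Qed.
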